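(* Let $n\ge2$, $1\le i\le n-1$ and $R>0$. Then $D^n_{i,R}$ is a Banach space with respect to $\|\cdot\|$. In particular, $D^n_{i,R}$ is the completion of $C_c([0,\infty))\cap D^n_{i,R}$ with respect to $\|\cdot\|$.
   Context: $C_b(0,\infty)$ = continuous functions on $(0,\infty)$ with support bounded from above. $D^n_i=\{\zeta\in C_b(0,\infty):\lim_{t\to0}t^{n-i}\zeta(t)=0,\ \lim_{t\to0}\int_t^\infty\zeta(s)s^{n-i-1}ds\text{ exists and is finite}\}$; $D^n_{i,R}=\{\zeta\in D^n_i:\mathrm{supp}\,\zeta\subset(0,R]\}$. Elements of $C_c([0,\infty))$ are regarded as functions on $(0,\infty)$ by restriction. The norm is $\|\zeta\|=\sup_{t>0}\left|(n-i)\int_t^\infty\zeta(s)s^{n-i-1}ds\right|+\sup_{t>0}\left|t^{n-i}\zeta(t)+(n-i)\int_t^\infty\zeta(s)s^{n-i-1}ds\right|$. *)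

From HB Require Import structures.
From mathcomp Require Import all_boot all_order all_algebra.
From mathcomp Require Import all_classical all_reals all_analysis.
Set Implicit Arguments. Unset Strict Implicit. Unset Printing Implicit Defensive.
Import Order.TTheory GRing.Theory Num.Theory.
Import numFieldNormedType.Exports.
Local Open Scope classical_set_scope.
Local Open Scope ring_scope.

Section Defs.
Variable R : realType.

Definition tailint (n i : nat) (zeta : R -> R) (t : R) : R :=
  Rintegral lebesgue_measure `[t, +oo[ (fun s => zeta s * s ^+ (n - i - 1)).

(* functions on (0,oo) are represented by functions R -> R vanishing on (-oo,0] *)
Definition Cb (zeta : R -> R) : Prop :=
  {within `]0, +oo[, continuous zeta} /\
  (forall t, t <= 0 -> zeta t = 0) /\
  (exists M : R, forall t, M < t -> zeta t = 0).

Definition Dn (n i : nat) (zeta : R -> R) : Prop :=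
  Cb zeta /\
  (t ^+ (n - i) * zeta t @[t --> 0^'+] --> 0) /\
  (exists L : R, tailint n i zeta t @[t --> 0^'+] --> L).

Definition DnR (n i : nat) (Rb : R) (zeta : R -> R) : Prop :=
  Dn n i zeta /\ (forall t, Rb < t -> zeta t = 0).

Definition Dnorm (n i : nat) (zeta : R -> R) : R :=
  sup [set `|(n - i)%:R * tailint n i zeta t| | t in `]0, +oo[] +
  sup [set `|t ^+ (n - i) * zeta t + (n - i)%:R * tailint n i zeta t|
        | t in `]0, +oo[].

(* elements of C_c([0,oo)), regarded as functions on (0,oo) *)
Definition Cc0 (f : R -> R) : Prop :=
  {within `[0, +oo[, continuous f} /\
  (exists M : R, forall t, 0 <= t -> M < t -> f t = 0).

End Defs.

From HB Require Import structures.
From mathcomp Require Import all_boot all_order all_algebra.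
From mathcomp Require Import all_classical all_reals all_analysis.
From mathcomp Require Import ring.
Import Order.TTheory GRing.Theory Num.Theory Num.Def.
Import numFieldNormedType.Exports.
Local Open Scope classical_set_scope.
Local Open Scope ring_scope.
Set Implicit Arguments. Unset Strict Implicit. Unset Printing Implicit Defensive.

(* The weighted value t^(n-i) f(t) is the difference of the two quantities
   whose suprema add up to the norm, so a Cauchy sequence (u_k) converges
   uniformly in this weighted sense, hence uniformly on every [c, +oo) with
   c > 0, to a pointwise limit z.  As all supports lie in (0, R], the tail
   integral at t is at most R/t times sup_(s >= t) |s^(n-i) f(s)|, so the tail
   integrals converge pointwise too and both parts of the norm of u_k - z
   become uniformly small; the limits at 0 required of z follow by exchanging
   the limits in k and in t.  For density, freeze z below a small d, replacing
   z(t) by z(d) on (0, d]: this extends continuously to [0, +oo), and its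
   distance to z is controlled by sup_(t <= d) |t^(n-i) z(t)| and by the
   oscillation of the tail integral of z near 0, both of which vanish as
   d -> 0. *)

Section RealFacts.
Variable R : realType.
Implicit Types (f h : R -> R) (a b d t x K : R).
Notation mu := (@lebesgue_measure R).

Lemma continuous_at_pos f x :
  {within `]0, +oo[, continuous f} -> 0 < x -> {for x, continuous f}.
Proof.
rewrite continuous_open_subspace; last exact: interval_open.
by move=> + x0; apply; rewrite inE /= in_itv /= x0.
Qed.

Lemma cvg_at_right0_close h (L eta : R) : h t @[t --> 0^'+] --> L -> 0 < eta ->
  exists2 d, 0 < d & forall t, 0 < t -> t < d -> `|h t - L| <= eta.
Proof.
move=> /cvgrPdist_le /[apply] /nbhs_ballP[d d0 hd]; exists d => // t t0 td.
rewrite distrC; apply: (hd _ _ t0).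
by rewrite /ball /= sub0r normrN gtr0_norm.
Qed.

Lemma pos_itvE t : (`]0, +oo[%classic : set R) t = (0 < t).
Proof. by rewrite /= in_itv /= andbT. Qed.

Lemma near_at_right0 (P : R -> Prop) : (forall t, 0 < t -> P t) ->
  \forall t \near 0^'+, P t.
Proof. by move=> hP; near=> t; apply: hP; near: t; exact: nbhs_right_gt.
Unshelve. all: by end_near. Qed.

Lemma bounded_away0 h d b : 0 < d ->
  (forall x, 0 < x -> {for x, continuous h}) -> (forall t, b < t -> h t = 0) ->
  exists K, forall t, d <= t -> `|h t| <= K.
Proof.
move=> d0 hc hb; pose c := maxr d b.
have hcdc : {within `[d, c], continuous h}.
  apply: continuous_in_subspaceT => x; rewrite inE /= in_itv /= => /andP[dx _].
  exact: hc (lt_le_trans d0 dx).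
have [M [_ hM]] := compact_bounded (continuous_compact hcdc (@segment_compact _ d c)).
exists (maxr 0 (M + 1)) => t dt; have [tc|ct] := leP t c.
  rewrite le_max (hM (M + 1)) ?orbT ?ltrDl //.
  by exists t => //; rewrite /= in_itv /= dt tc.
by rewrite hb ?normr0 ?le_max ?lexx // (le_lt_trans _ ct) // le_max lexx orbT.
Qed.

Lemma normr_Rintegral_itv_le h a b K : a <= b ->
  mu.-integrable `[a, b] (EFin \o h) ->
  (forall s, a <= s -> s <= b -> `|h s| <= K) ->
  `|\int[mu]_(s in `[a, b]) h s| <= K * (b - a).
Proof.
move=> ab ih hK; apply: le_trans (le_normr_Rintegral _ _) _ => //.
apply: le_trans (@le_Rintegral _ _ _ _ _ _ (cst K) _ _ _ _) _ => //.
- exact: integrable_norm.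
- apply: continuous_compact_integrable; first exact: segment_compact.
  exact/continuous_subspaceT/cst_continuous.
- by move=> s; rewrite /= in_itv /= => /andP[? ?]; apply: hK.
rewrite Rintegral_cst //= lebesgue_measure_itv /= lte_fin.
by case: ltP => //= ba; rewrite (_ : b = a) ?subrr ?mulr0 //; apply/le_anti/andP.
Qed.

Lemma Rintegral_itv_split h a x (b : itv_bound R) : a <= x -> (BRight x <= b)%O ->
  mu.-integrable [set` Interval (BLeft a) b] (EFin \o h) ->
  \int[mu]_(s in [set` Interval (BLeft a) b]) h s =
  \int[mu]_(s in `[a, x]) h s + \int[mu]_(s in [set` Interval (BLeft x) b]) h s.
Proof.
move=> ax xb hi; have := @Rintegral_itvB R h (BLeft a) b x hi.
rewrite bnd_simp ax => /(_ isT xb) split_at_x.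
rewrite -(@Rintegral_itv_obnd_cbnd _ x); first by rewrite -split_at_x addrC subrK.
by apply: integrableS hi => //; apply: subset_itvr; rewrite bnd_simp.
Qed.

Lemma patch_itv_vanish h t b : t <= b -> (forall s, b < s -> h s = 0) ->
  h \_ `[t, +oo[ = h \_ `[t, b].
Proof.
move=> tb hb; apply/funext => s; rewrite /patch !mem_setE !in_itv /= andbT.
by case: (leP t s) => //= ts; case: (leP s b) => //= /hb.
Qed.

Lemma cvg_switch_near (F : set_system R) {FF : ProperFilter F}
    (A : set R) (g : nat -> R -> R) (h : R -> R) (L : nat -> R) :
  (\forall t \near F, A t) ->
  (forall e, 0 < e -> \forall k \near \oo, forall t, A t -> `|h t - g k t| < e) ->
  (forall k, g k t @[t --> F] --> L k) ->
  exists l : R, L k @[k --> \oo] --> l /\ h t @[t --> F] --> l.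
Proof.
(* Off A the functions G k agree with h, so G k --> h uniformly on all of R. *)
move=> FA gh gL; pose G k := patch h A (g k).
have Gh : G @ \oo --> (h : arrow_uniform_type R R).
  apply/(@cvg_ballP _ (arrow_uniform_type R R) _ _ _ G) => e e0.
  near=> k => t; rewrite /ball /= /G /patch; case: ifPn => [/set_mem At|_].
    by move: t At; near: k; exact: gh.
  by rewrite subrr normr0.
have GL k : G k t @[t --> F] --> L k.
  apply: cvg_trans (gL k); apply: near_eq_cvg; near=> t.
  by rewrite /G /patch ifT //; apply/mem_set; near: t.
exact: cvg_switch Gh GL.
Unshelve. all: by end_near.
Qed.

End RealFacts.

Section TailIntegral.
Variables (R : realType) (n i : nat) (Rb : R).
Hypothesis Rb_ge0 : 0 <= Rb.
Implicit Types (f g : R -> R) (a t K : R).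
Notation mu := (@lebesgue_measure R).

Definition tail_integrand f s := f s * s ^+ (n - i - 1).

Definition cont_supp f :=
  {within `]0, +oo[, continuous f} /\ (forall s, Rb < s -> f s = 0).

Lemma tailintE f t : tailint n i f t = \int[mu]_(s in `[t, +oo[) tail_integrand f s.
Proof. by []. Qed.

Lemma cont_suppD f g : cont_supp f -> cont_supp g -> cont_supp (f \+ g).
Proof.
move=> [cf sf] [cg sg]; split; last by move=> s sR; rewrite /= sf // sg // addr0.
move: cf cg; rewrite !continuous_open_subspace; try exact: interval_open.
by move=> cf cg x xA; apply: cvgD; [apply: cf | apply: cg].
Qed.

Lemma cont_suppB f g : cont_supp f -> cont_supp g -> cont_supp (f \- g).
Proof.
move=> [cf sf] [cg sg]; split; last by move=> s sR; rewrite /= sf // sg // subr0.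
move: cf cg; rewrite !continuous_open_subspace; try exact: interval_open.
by move=> cf cg x xA; apply: cvgB; [apply: cf | apply: cg].
Qed.

Lemma cont_suppZ a f : cont_supp f -> cont_supp (fun s => a * f s).
Proof.
move=> [cf sf]; split; last by move=> s sR; rewrite sf // mulr0.
move: cf; rewrite !continuous_open_subspace; try exact: interval_open.
by move=> cf x xA; apply: cvgM; [apply: cvg_cst | apply: cf].
Qed.

Lemma integrable_tail_integrand_itv f a b : 0 < a ->
  {within `]0, +oo[, continuous f} ->
  mu.-integrable `[a, b] (EFin \o tail_integrand f).
Proof.
move=> a0 cf; apply: continuous_compact_integrable; first exact: segment_compact.
apply: continuous_in_subspaceT => x; rewrite inE /= in_itv /= => /andP[ax _].
apply: cvgM; [exact: continuous_at_pos (lt_le_trans a0 ax) | exact: exprn_continuous].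
Qed.

Lemma tailint_itv f t b : t <= b -> (forall s, b < s -> f s = 0) ->
  tailint n i f t = \int[mu]_(s in `[t, b]) tail_integrand f s.
Proof.
move=> tb fb; rewrite tailintE Rintegral_mkcond (patch_itv_vanish tb).
  by rewrite -Rintegral_mkcond.
by move=> s /fb; rewrite /tail_integrand => ->; rewrite mul0r.
Qed.

Lemma integrable_tail_integrand f t : 0 < t -> cont_supp f ->
  mu.-integrable `[t, +oo[ (EFin \o tail_integrand f).
Proof.
move=> t0 [cf sf]; have tc : t <= maxr t Rb by rewrite le_max lexx.
have vanish s : maxr t Rb < s -> tail_integrand f s = 0.
  by rewrite gt_max => /andP[_ Rbs]; rewrite /tail_integrand sf ?mul0r.
apply/(@integrable_mkcond _ _ _ mu _ _ (measurable_itv `[t, +oo[)).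
rewrite restrict_EFin (patch_itv_vanish tc vanish) -restrict_EFin.
apply/(@integrable_mkcond _ _ _ mu _ _ (measurable_itv `[t, maxr t Rb])).
exact: integrable_tail_integrand_itv.
Qed.

Lemma tailint_split f t d : 0 < t -> t <= d -> cont_supp f ->
  tailint n i f t = \int[mu]_(s in `[t, d]) tail_integrand f s + tailint n i f d.
Proof.
move=> t0 td hf; rewrite !tailintE (@Rintegral_itv_split _ _ _ d) //.
exact: integrable_tail_integrand.
Qed.

Lemma tailint_le f t K : 0 < t -> cont_supp f ->
  (forall s, t <= s -> `|tail_integrand f s| <= K) -> `|tailint n i f t| <= K * Rb.
Proof.
move=> t0 [cf sf] hK; have tc : t <= maxr t Rb by rewrite le_max lexx.
rewrite (@tailint_itv _ _ (maxr t Rb)) //; last first.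
  by move=> s; rewrite gt_max => /andP[_ /sf].
apply: le_trans (normr_Rintegral_itv_le tc _ _) _.
- exact: integrable_tail_integrand_itv.
- by move=> s ts _; apply: hK.
apply: ler_wpM2l; first exact: le_trans (hK t (lexx t)).
by have [_|_] := leP t Rb; rewrite ?subrr // gerBl ltW.
Qed.

Lemma tailintD f g t : 0 < t -> cont_supp f -> cont_supp g ->
  tailint n i (f \+ g) t = tailint n i f t + tailint n i g t.
Proof.
move=> t0 hf hg; rewrite !tailintE -RintegralD //.
- by apply: eq_Rintegral => s _; rewrite /tail_integrand /= mulrDl.
- exact: integrable_tail_integrand.
- exact: integrable_tail_integrand.
Qed.

Lemma tailintZ a f t : 0 < t -> cont_supp f ->
  tailint n i (fun s => a * f s) t = a * tailint n i f t.
Proof.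
move=> t0 hf; rewrite !tailintE -RintegralZl //; last exact: integrable_tail_integrand.
by apply: eq_Rintegral => s _; rewrite /tail_integrand mulrA.
Qed.

Lemma tailintB f g t : 0 < t -> cont_supp f -> cont_supp g ->
  tailint n i (f \- g) t = tailint n i f t - tailint n i g t.
Proof.
move=> t0 hf hg; rewrite !tailintE -RintegralB //.
- by apply: eq_Rintegral => s _; rewrite /tail_integrand /= mulrBl.
- exact: integrable_tail_integrand.
- exact: integrable_tail_integrand.
Qed.

End TailIntegral.

Section Space.
Variables (R : realType) (n i : nat) (Rb : R).
Hypothesis Rb_gt0 : 0 < Rb.
Implicit Types (f g : R -> R) (a t : R).
Local Notation m := (n - i)%N.
Local Notation D := (DnR n i Rb).
Local Notation cont_supp := (cont_supp Rb).

Lemma DnR_cont_supp f : D f -> cont_supp f.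
Proof. by move=> [[[cf _] _] sf]. Qed.

Lemma DnR_le0 f t : D f -> t <= 0 -> f t = 0.
Proof. by move=> [[[_ [f0 _]] _] _]; apply: f0. Qed.

Lemma DnR_weight_cvg f : D f -> t ^+ m * f t @[t --> 0^'+] --> 0.
Proof. by move=> [[_ []]]. Qed.

Lemma DnR_tail_cvg f : D f -> exists L : R, tailint n i f t @[t --> 0^'+] --> L.
Proof. by move=> [[_ []]]. Qed.

Lemma DnRP f : cont_supp f -> (forall t, t <= 0 -> f t = 0) ->
  t ^+ m * f t @[t --> 0^'+] --> 0 ->
  (exists L : R, tailint n i f t @[t --> 0^'+] --> L) -> D f.
Proof. by move=> [cf sf] f0 fw ft; do 4 split=> //; exists Rb. Qed.

Lemma DnR0 : D (fun _ => 0).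
Proof.
apply: DnRP.
- by split; [exact/continuous_subspaceT/cst_continuous | by []].
- by [].
- by under eq_fun do rewrite mulr0; exact: cvg_cst.
exists 0; apply: cvg_trans (near_eq_cvg _) (cvg_cst 0); apply: near_at_right0 => t _.
rewrite tailintE (@eq_Rintegral _ _ _ _ _ (cst 0)) ?Rintegral_cst ?mul0r // => s _.
by rewrite /tail_integrand mul0r.
Qed.

Lemma DnRD f g : D f -> D g -> D (f \+ g).
Proof.
move=> Df Dg; apply: DnRP.
- exact: cont_suppD (DnR_cont_supp Df) (DnR_cont_supp Dg).
- by move=> t t0; rewrite /= (DnR_le0 Df) // (DnR_le0 Dg) // addr0.
- under eq_fun do rewrite mulrDr.
  by have := cvgD (DnR_weight_cvg Df) (DnR_weight_cvg Dg); rewrite addr0; exact.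
have [[L1 hL1] [L2 hL2]] := (DnR_tail_cvg Df, DnR_tail_cvg Dg).
exists (L1 + L2); apply: cvg_trans (near_eq_cvg _) (cvgD hL1 hL2).
apply: near_at_right0 => t t0.
by rewrite (tailintD _ _ t0 (DnR_cont_supp Df) (DnR_cont_supp Dg)).
Qed.

Lemma DnRZ a f : D f -> D (fun t => a * f t).
Proof.
move=> Df; apply: DnRP.
- exact: cont_suppZ (DnR_cont_supp Df).
- by move=> t t0; rewrite (DnR_le0 Df) // mulr0.
- under eq_fun do rewrite mulrCA.
  by have := cvgM (cvg_cst a) (DnR_weight_cvg Df); rewrite mulr0; exact.
have [L hL] := DnR_tail_cvg Df.
exists (a * L); apply: cvg_trans (near_eq_cvg _) (cvgM (cvg_cst a) hL).
apply: near_at_right0 => t t0.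
by rewrite (tailintZ _ _ _ t0 (DnR_cont_supp Df)).
Qed.

Lemma DnRB f g : D f -> D g -> D (f \- g).
Proof.
move=> Df Dg; have -> : f \- g = f \+ (fun t => -1 * g t).
  by apply/funext => t /=; rewrite mulN1r.
by apply: DnRD => //; apply: DnRZ.
Qed.

Definition tail_part f t := m%:R * tailint n i f t.
Definition full_part f t := t ^+ m * f t + tail_part f t.

Lemma DnormE f : Dnorm n i f =
  sup [set `|tail_part f t| | t in `]0, +oo[] +
  sup [set `|full_part f t| | t in `]0, +oo[].
Proof. by []. Qed.

Lemma tail_partD f g t : 0 < t -> cont_supp f -> cont_supp g ->
  tail_part (f \+ g) t = tail_part f t + tail_part g t.
Proof. by move=> t0 hf hg; rewrite /tail_part (tailintD _ _ t0 hf hg) mulrDr. Qed.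

Lemma tail_partB f g t : 0 < t -> cont_supp f -> cont_supp g ->
  tail_part (f \- g) t = tail_part f t - tail_part g t.
Proof. by move=> t0 hf hg; rewrite /tail_part (tailintB _ _ t0 hf hg) mulrBr. Qed.

Lemma tail_partZ a f t : 0 < t -> cont_supp f ->
  tail_part (fun s => a * f s) t = a * tail_part f t.
Proof. by move=> t0 hf; rewrite /tail_part (tailintZ _ _ _ t0 hf) mulrCA. Qed.

Lemma full_partD f g t : 0 < t -> cont_supp f -> cont_supp g ->
  full_part (f \+ g) t = full_part f t + full_part g t.
Proof. by move=> t0 hf hg; rewrite /full_part tail_partD //= mulrDr addrACA. Qed.

Lemma full_partB f g t : 0 < t -> cont_supp f -> cont_supp g ->
  full_part (f \- g) t = full_part f t - full_part g t.
Proof. by move=> t0 hf hg; rewrite /full_part tail_partB //= mulrBr opprD addrACA. Qed.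

Lemma full_partZ a f t : 0 < t -> cont_supp f ->
  full_part (fun s => a * f s) t = a * full_part f t.
Proof. by move=> t0 hf; rewrite /full_part tail_partZ // mulrDr mulrCA. Qed.

Lemma weight_bounded f : D f -> exists K, forall t, 0 < t -> `|t ^+ m * f t| <= K.
Proof.
move=> Df; have [cf sf] := DnR_cont_supp Df.
have [d d0 near0] := cvg_at_right0_close (DnR_weight_cvg Df) ltr01.
have [K hK] : exists K, forall t, d <= t -> `|t ^+ m * f t| <= K.
  apply: (bounded_away0 d0 _ (b := Rb)); last by move=> t /sf ->; rewrite mulr0.
  by move=> x x0; apply: cvgM; [exact: exprn_continuous | exact: continuous_at_pos].
exists (maxr 1 K) => t t0; rewrite le_max; have [td|dt] := ltP t d.
  by rewrite -[_ * _]subr0 near0.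
by rewrite hK ?orbT.
Qed.

Lemma tailint_bounded f : D f -> exists K, forall t, 0 < t -> `|tailint n i f t| <= K.
Proof.
move=> Df; have [cf sf] := DnR_cont_supp Df; have [L hL] := DnR_tail_cvg Df.
have [d d0 near0] := cvg_at_right0_close hL ltr01.
have [K hK] : exists K, forall t, d <= t -> `|tail_integrand n i f t| <= K.
  apply: (bounded_away0 d0 _ (b := Rb)).
    by move=> x x0; apply: cvgM; [exact: continuous_at_pos | exact: exprn_continuous].
  by move=> t /sf; rewrite /tail_integrand => ->; rewrite mul0r.
exists (maxr (`|L| + 1) (K * Rb)) => t t0; rewrite le_max; have [td|dt] := ltP t d.
  by rewrite -[tailint _ _ _ _](subrK L) addrC (le_trans (ler_normD _ _)) // lerD2l near0.
rewrite (tailint_le (ltW Rb_gt0) t0 (DnR_cont_supp Df)) ?orbT //.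
by move=> s ts; apply: hK (le_trans dt ts).
Qed.

Lemma has_ubound_tail_part f : D f ->
  has_ubound [set `|tail_part f t| | t in `]0, +oo[].
Proof.
move=> Df; have [K hK] := tailint_bounded Df.
exists (m%:R * K) => _ [t t0 <-]; rewrite pos_itvE in t0.
by rewrite normrM ger0_norm // ler_wpM2l // hK.
Qed.

Lemma has_ubound_full_part f : D f ->
  has_ubound [set `|full_part f t| | t in `]0, +oo[].
Proof.
move=> Df; have [K hK] := tailint_bounded Df; have [K' hK'] := weight_bounded Df.
exists (K' + m%:R * K) => _ [t t0 <-]; rewrite pos_itvE in t0.
rewrite (le_trans (ler_normD _ _)) // lerD ?hK' //.
by rewrite normrM ger0_norm // ler_wpM2l // hK.
Qed.

Lemma tail_part_le_sup f t : D f -> 0 < t ->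
  `|tail_part f t| <= sup [set `|tail_part f t| | t in `]0, +oo[].
Proof.
by move=> Df t0; apply: (ub_le_sup (has_ubound_tail_part Df)); exists t; rewrite ?pos_itvE.
Qed.

Lemma full_part_le_sup f t : D f -> 0 < t ->
  `|full_part f t| <= sup [set `|full_part f t| | t in `]0, +oo[].
Proof.
by move=> Df t0; apply: (ub_le_sup (has_ubound_full_part Df)); exists t; rewrite ?pos_itvE.
Qed.

Lemma Dnorm_ge0 f : D f -> 0 <= Dnorm n i f.
Proof.
move=> Df; rewrite DnormE addr_ge0 //.
- exact: le_trans (tail_part_le_sup Df ltr01).
- exact: le_trans (full_part_le_sup Df ltr01).
Qed.

Lemma Dnorm_le f c1 c2 : (forall t, 0 < t -> `|tail_part f t| <= c1) ->
  (forall t, 0 < t -> `|full_part f t| <= c2) -> Dnorm n i f <= c1 + c2.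
Proof.
move=> h1 h2; rewrite DnormE lerD //; apply: ge_sup.
- by exists `|tail_part f 1|, 1; rewrite ?pos_itvE.
- by move=> _ [t t0 <-]; rewrite pos_itvE in t0; apply: h1.
- by exists `|full_part f 1|, 1; rewrite ?pos_itvE.
- by move=> _ [t t0 <-]; rewrite pos_itvE in t0; apply: h2.
Qed.

Lemma tail_part_le_Dnorm f t : D f -> 0 < t -> `|tail_part f t| <= Dnorm n i f.
Proof.
move=> Df t0; rewrite DnormE -[leLHS]addr0 lerD ?tail_part_le_sup //.
exact: le_trans (full_part_le_sup Df ltr01).
Qed.

Lemma full_part_le_Dnorm f t : D f -> 0 < t -> `|full_part f t| <= Dnorm n i f.
Proof.
move=> Df t0; rewrite DnormE -[leLHS]add0r lerD ?full_part_le_sup //.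
exact: le_trans (tail_part_le_sup Df ltr01).
Qed.

Lemma weight_le_Dnorm f t : D f -> 0 < t -> `|t ^+ m * f t| <= Dnorm n i f.
Proof.
move=> Df t0; have -> : t ^+ m * f t = full_part f t - tail_part f t by rewrite addrK.
rewrite DnormE (le_trans (ler_normB _ _)) // addrC.
by rewrite lerD ?tail_part_le_sup ?full_part_le_sup.
Qed.

Lemma Dnorm_eq0 f : D f -> Dnorm n i f = 0 -> f = (fun _ => 0).
Proof.
move=> Df f0; apply/funext => t; have [t_le0|t0] := leP t 0; first exact: DnR_le0.
apply/eqP; have := weight_le_Dnorm Df t0.
by rewrite f0 normr_le0 mulf_eq0 expf_eq0 (gt_eqF t0) andbF.
Qed.

Lemma DnormZ_le a f : D f -> Dnorm n i (fun t => a * f t) <= `|a| * Dnorm n i f.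
Proof.
move=> Df; have cf := DnR_cont_supp Df; rewrite [Dnorm n i f]DnormE mulrDr.
apply: Dnorm_le => t t0.
  by rewrite tail_partZ // normrM ler_wpM2l ?tail_part_le_sup.
by rewrite full_partZ // normrM ler_wpM2l ?full_part_le_sup.
Qed.

Lemma DnormZ a f : D f -> Dnorm n i (fun t => a * f t) = `|a| * Dnorm n i f.
Proof.
move=> Df; apply/le_anti; rewrite DnormZ_le //=.
have [->|a0] := eqVneq a 0; first by rewrite normr0 mul0r Dnorm_ge0 //; apply: DnRZ.
have aK : (fun t => a^-1 * (a * f t)) = f by apply/funext => t; rewrite mulKf.
have := DnormZ_le a^-1 (DnRZ a Df); rewrite aK normfV.
by rewrite ler_pdivlMl ?normr_gt0.
Qed.

Lemma Dnorm_triangle f g : D f -> D g ->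
  Dnorm n i (f \+ g) <= Dnorm n i f + Dnorm n i g.
Proof.
move=> Df Dg; have [cf cg] := (DnR_cont_supp Df, DnR_cont_supp Dg).
rewrite (DnormE f) (DnormE g) addrACA; apply: Dnorm_le => t t0.
  by rewrite tail_partD // (le_trans (ler_normD _ _)) // lerD ?tail_part_le_sup.
by rewrite full_partD // (le_trans (ler_normD _ _)) // lerD ?full_part_le_sup.
Qed.

End Space.

Section Completeness.
Variables (R : realType) (n i : nat) (Rb : R).
Hypotheses (Rb_gt0 : 0 < Rb) (m_gt0 : (0 < n - i)%N).
Implicit Types (f : R -> R) (t : R).
Local Notation m := (n - i)%N.
Local Notation D := (DnR n i Rb).
Local Notation cont_supp := (cont_supp Rb).
Local Notation tail_part := (tail_part n i).
Local Notation full_part := (full_part n i).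

Lemma mul_tail_integrand f s : s * tail_integrand n i f s = s ^+ m * f s.
Proof. by rewrite /tail_integrand mulrCA -exprS mulrC subn1 prednK. Qed.

Lemma tailint_weight_le f t c : cont_supp f -> 0 < t ->
  (forall s, t <= s -> `|s ^+ m * f s| <= c) -> `|tailint n i f t| <= c / t * Rb.
Proof.
move=> hf t0 hc; apply: (@tailint_le _ n i Rb (ltW Rb_gt0) f t (c / t) t0 hf) => s ts.
have s0 := lt_le_trans t0 ts; have := hc s ts.
rewrite -mul_tail_integrand normrM (gtr0_norm s0) ler_pdivlMr // => h.
by apply: le_trans h; rewrite mulrC; apply: ler_wpM2r.
Qed.

Variable u : nat -> R -> R.
Hypothesis u_in : forall k, D (u k).
Hypothesis u_cauchy : forall e, 0 < e -> exists N, forall p q,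
  (N <= p)%N -> (N <= q)%N -> Dnorm n i (u p \- u q) < e.

Lemma weight_cauchy e : 0 < e -> exists N, forall p q t,
  (N <= p)%N -> (N <= q)%N -> 0 < t -> `|t ^+ m * (u p t - u q t)| < e.
Proof.
move=> e0; have [N hN] := u_cauchy e0; exists N => p q t Np Nq t0.
exact: le_lt_trans (weight_le_Dnorm Rb_gt0 (DnRB (u_in p) (u_in q)) t0) (hN p q Np Nq).
Qed.

Definition zlim t := lim (u k t @[k --> \oo]).

Lemma cvg_zlim t : u k t @[k --> \oo] --> zlim t.
Proof.
rewrite /zlim; have [t_le0|t0] := leP t 0.
  have -> : (fun k => u k t) = fun=> 0 by apply/funext => k; exact: DnR_le0.
  exact: is_cvg_cst.
apply/cauchy_cvgP/cauchy_exP => e e0; have tm : 0 < t ^+ m by rewrite exprn_gt0.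
have [N hN] := weight_cauchy (mulr_gt0 e0 tm); exists (u N t), N => // k /= Nk.
by have := hN N k t (leqnn N) Nk t0; rewrite normrM (gtr0_norm tm) mulrC ltr_pM2r.
Qed.

Lemma zlim_eq0 t : (forall k, u k t = 0) -> zlim t = 0.
Proof.
by move=> u0; rewrite /zlim (_ : (fun k => u k t) = fun=> 0) ?lim_cst //; apply/funext.
Qed.

Lemma weight_sub_zlim_le e : 0 < e -> exists N, forall k t, (N <= k)%N -> 0 < t ->
  `|t ^+ m * (u k t - zlim t)| <= e.
Proof.
move=> e0; have [N hN] := weight_cauchy e0; exists N => k t Nk t0.
apply: (cvgr_to_le (F := \oo) (f := fun q => `|t ^+ m * (u k t - u q t)|)).
  apply: cvg_norm; apply: cvgM; first exact: cvg_cst.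
  by apply: cvgB; [exact: cvg_cst | exact: cvg_zlim].
by exists N => // q /= Nq; apply/ltW/hN.
Qed.

Lemma zlim_ucvg_away0 c e : 0 < c -> 0 < e ->
  \forall k \near \oo, forall s, c < s -> `|zlim s - u k s| < e.
Proof.
move=> c0 e0; have cm : 0 < c ^+ m by rewrite exprn_gt0.
have e2 : 0 < e / 2 by rewrite divr_gt0.
have half : e / 2 < e by rewrite ltr_pdivrMr // ltr_pMr // ltr1n.
have [N hN] := weight_sub_zlim_le (mulr_gt0 e2 cm).
exists N => // k /= Nk s cs; have s0 := lt_trans c0 cs.
apply: le_lt_trans half; rewrite -(ler_pM2r cm) distrC.
apply: le_trans (hN k s Nk s0); rewrite normrM (ger0_norm (exprn_ge0 _ (ltW s0))) mulrC.
by apply: ler_wpM2r => //; apply: lerXn2r; rewrite ?nnegrE ?ltW.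
Qed.

Lemma zlim_cont : {within `]0, +oo[, continuous zlim}.
Proof.
rewrite continuous_open_subspace; last exact: interval_open.
move=> x; rewrite inE /= in_itv /= andbT => x0.
have x2 : 0 < x / 2 by rewrite divr_gt0.
have x2x : x / 2 < x by rewrite ltr_pdivrMr // ltr_pMr // ltr1n.
have [l [ul zl]] := @cvg_switch_near R (nbhs x) _ [set s | x / 2 < s] u zlim
  (fun k => u k x) (lt_nbhsr x2x) (fun e e0 => zlim_ucvg_away0 x2 e0)
  (fun k => continuous_at_pos (DnR_cont_supp (u_in k)).1 x0).
have zx : zlim x = l := cvg_lim _ ul.
by rewrite /continuous_at zx.
Qed.

Lemma zlim_cont_supp : cont_supp zlim.
Proof.
split; first exact: zlim_cont.
by move=> s sRb; apply: zlim_eq0 => k; apply: (DnR_cont_supp (u_in k)).2.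
Qed.

Lemma zlim_le0 t : t <= 0 -> zlim t = 0.
Proof. by move=> t0; apply: zlim_eq0 => k; exact: DnR_le0. Qed.

Lemma cvg_tailint_zlim t : 0 < t ->
  tailint n i (u k) t @[k --> \oo] --> tailint n i zlim t.
Proof.
move=> t0; apply/cvgrPdist_le => e e0.
have [N hN] := weight_sub_zlim_le (divr_gt0 (mulr_gt0 e0 t0) Rb_gt0); exists N => // k /= Nk.
have cu := DnR_cont_supp (u_in k).
rewrite -(tailintB _ _ t0 zlim_cont_supp cu).
apply: le_trans (tailint_weight_le (c := e * t / Rb) (cont_suppB zlim_cont_supp cu) t0 _) _.
  by move=> s ts; rewrite /= -opprB mulrN normrN hN // (lt_le_trans t0).
have -> : e * t / Rb / t * Rb = e by field; rewrite !gt_eqF.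
exact: lexx.
Qed.

Lemma cvg_tail_part_zlim t : 0 < t ->
  tail_part (u k) t @[k --> \oo] --> tail_part zlim t.
Proof. by move=> t0; apply: cvgM; [exact: cvg_cst | exact: cvg_tailint_zlim]. Qed.

Lemma cvg_full_part_zlim t : 0 < t ->
  full_part (u k) t @[k --> \oo] --> full_part zlim t.
Proof.
move=> t0; apply: cvgD; last exact: cvg_tail_part_zlim.
by apply: cvgM; [exact: cvg_cst | exact: cvg_zlim].
Qed.

Lemma parts_sub_zlim_le e : 0 < e -> exists N, forall k t, (N <= k)%N -> 0 < t ->
  `|tail_part (u k \- zlim) t| <= e /\ `|full_part (u k \- zlim) t| <= e.
Proof.
move=> e0; have [N hN] := u_cauchy e0; exists N => k t Nk t0.
have cu q := DnR_cont_supp (u_in q); have cz := zlim_cont_supp.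
have le_limit (P : (R -> R) -> R) : P (u k) - P (u q) @[q --> \oo] --> P (u k) - P zlim ->
    (forall q, (N <= q)%N -> `|P (u k) - P (u q)| <= e) -> `|P (u k) - P zlim| <= e.
  by move=> Pcvg hP; apply: cvgr_to_le (cvg_norm Pcvg) _; exists N.
rewrite (tail_partB _ _ t0 (cu k) cz) (full_partB _ _ t0 (cu k) cz); split.
- apply: (le_limit (tail_part^~ t)) => [|q Nq].
    by apply: cvgB; [exact: cvg_cst | exact: cvg_tail_part_zlim].
  rewrite -(tail_partB _ _ t0 (cu k) (cu q)); apply/ltW/(le_lt_trans _ (hN k q Nk Nq)).
  exact: (tail_part_le_Dnorm Rb_gt0 (DnRB (u_in k) (u_in q)) t0).
- apply: (le_limit (full_part^~ t)) => [|q Nq].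
    by apply: cvgB; [exact: cvg_cst | exact: cvg_full_part_zlim].
  rewrite -(full_partB _ _ t0 (cu k) (cu q)); apply/ltW/(le_lt_trans _ (hN k q Nk Nq)).
  exact: (full_part_le_Dnorm Rb_gt0 (DnRB (u_in k) (u_in q)) t0).
Qed.

Lemma zlim_weight_cvg : t ^+ m * zlim t @[t --> 0^'+] --> 0.
Proof.
have unif e : 0 < e -> \forall k \near \oo, forall t, 0 < t ->
    `|t ^+ m * zlim t - t ^+ m * u k t| < e.
  move=> e0; have [N hN] := weight_sub_zlim_le (divr_gt0 e0 (ltr0n _ 2)).
  exists N => // k /= Nk t t0; rewrite -mulrBr -normrN -mulrN opprB.
  by rewrite (le_lt_trans (hN k t Nk t0)) // ltr_pdivrMr // ltr_pMr // ltr1n.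
have [l [l0 hl]] := @cvg_switch_near R 0^'+ _ [set t | 0 < t]
  (fun k t => t ^+ m * u k t) (fun t => t ^+ m * zlim t) (fun=> 0)
  (nbhs_right_gt 0) unif (fun k => DnR_weight_cvg (u_in k)).
by rewrite -(cvg_unique _ (cvg_cst 0) l0) in hl.
Qed.

Lemma zlim_tail_cvg : exists L : R, tailint n i zlim t @[t --> 0^'+] --> L.
Proof.
have m0 : 0 < m%:R :> R by rewrite ltr0n.
have unif e : 0 < e -> \forall k \near \oo, forall t, 0 < t ->
    `|tailint n i zlim t - tailint n i (u k) t| < e.
  move=> e0; have [N hN] := parts_sub_zlim_le (mulr_gt0 m0 (divr_gt0 e0 (ltr0n _ 2))).
  exists N => // k /= Nk t t0; have [+ _] := hN k t Nk t0.
  rewrite (tail_partB _ _ t0 (DnR_cont_supp (u_in k)) zlim_cont_supp) /tail_part.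
  rewrite -mulrBr normrM (gtr0_norm m0) ler_pM2l // distrC => /le_lt_trans; apply.
  by rewrite ltr_pdivrMr // ltr_pMr // ltr1n.
pose L k := lim (tailint n i (u k) t @[t --> 0^'+]).
have uL k : tailint n i (u k) t @[t --> 0^'+] --> L k.
  by have [l hl] := DnR_tail_cvg (u_in k); rewrite /L (cvg_lim _ hl).
have [l [_ hl]] := @cvg_switch_near R 0^'+ _ [set t | 0 < t]
  (fun k => tailint n i (u k)) (tailint n i zlim) L (nbhs_right_gt 0) unif uL.
by exists l.
Qed.

Lemma DnR_zlim : D zlim.
Proof. exact: DnRP zlim_cont_supp zlim_le0 zlim_weight_cvg zlim_tail_cvg. Qed.

Lemma DnR_complete : exists z, D z /\ Dnorm n i (u k \- z) @[k --> \oo] --> 0.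
Proof.
exists zlim; split; first exact: DnR_zlim.
apply/cvgrPdist_le => e e0; have [N hN] := parts_sub_zlim_le (divr_gt0 e0 (ltr0n _ 2)).
exists N => // k /= Nk; rewrite sub0r normrN ger0_norm; last first.
  exact: (Dnorm_ge0 Rb_gt0 (DnRB (u_in k) DnR_zlim)).
by rewrite [leRHS]splitr; apply: Dnorm_le => t t0; have [] := hN k t Nk t0.
Qed.

End Completeness.

Definition freeze_below (R : realType) (d : R) (f : R -> R) (t : R) :=
  if 0 < t then f (maxr t d) else 0.

Section Freeze.
Variables (R : realType) (n i : nat) (Rb : R).
Hypotheses (Rb_gt0 : 0 < Rb) (m_gt0 : (0 < n - i)%N).
Implicit Types (t : R).
Local Notation m := (n - i)%N.
Local Notation D := (DnR n i Rb).
Local Notation cont_supp := (cont_supp Rb).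
Notation mu := (@lebesgue_measure R).

Variables (z : R -> R) (d : R).
Hypotheses (z_in : D z) (d_gt0 : 0 < d).
Local Notation zd := (freeze_below d z).
Local Notation frozen := (tail_integrand n i (fun=> z d)).

Lemma freeze_below_ge t : d <= t -> zd t = z t.
Proof. by move=> dt; rewrite /freeze_below (lt_le_trans d_gt0 dt) max_l. Qed.

Lemma freeze_below_le t : 0 < t -> t <= d -> zd t = z d.
Proof. by move=> t0 td; rewrite /freeze_below t0 max_r. Qed.

Lemma continuous_freeze : continuous (fun t => z (maxr t d)).
Proof.
move=> x; apply: continuous_comp.
  exact: (@continuous_max _ _ id (fun=> d) x) (@cvg_id _ _) (cvg_cst d).
by apply: continuous_at_pos (DnR_cont_supp z_in).1 _; rewrite lt_max d_gt0 orbT.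
Qed.

Lemma cont_supp_freeze : cont_supp zd.
Proof.
split => [|t Rbt]; last first.
  rewrite /freeze_below (lt_trans Rb_gt0 Rbt) (DnR_cont_supp z_in).2 //.
  by rewrite lt_max Rbt.
rewrite continuous_open_subspace; last exact: interval_open.
move=> x; rewrite inE /= in_itv /= andbT => x0.
rewrite /continuous_at [X in _ --> X]/freeze_below x0.
have near_x : \forall t \near x, z (maxr t d) = zd t.
  by near=> t; rewrite /freeze_below ifT //; near: t; exact: lt_nbhsr.
exact: cvg_trans (near_eq_cvg near_x) (continuous_freeze (x := x)).
Unshelve. all: by end_near.
Qed.

Lemma integrable_frozen_integrand a b : mu.-integrable `[a, b] (EFin \o frozen).
Proof.
apply: continuous_compact_integrable; first exact: segment_compact.
apply: continuous_subspaceT => x.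
by apply: cvgM; [exact: cvg_cst | exact: exprn_continuous].
Qed.

Lemma normr_Rintegral_frozen_le a b : 0 <= a -> a <= b -> b <= d ->
  `|\int[mu]_(s in `[a, b]) frozen s| <= `|z d| * d ^+ (m - 1) * (b - a).
Proof.
move=> a0 ab bd; apply: normr_Rintegral_itv_le ab (integrable_frozen_integrand a b) _.
move=> s ass sb; have s0 := le_trans a0 ass.
rewrite /tail_integrand normrM (ger0_norm (exprn_ge0 _ s0)) ler_wpM2l //.
by apply: lerXn2r; rewrite ?nnegrE ?(ltW d_gt0) ?(le_trans sb bd).
Qed.

Lemma tailint_freeze_ge t : d <= t -> tailint n i zd t = tailint n i z t.
Proof.
move=> dt; rewrite !tailintE; apply: eq_Rintegral => s.
rewrite inE /= in_itv /= andbT => ts.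
by rewrite /tail_integrand freeze_below_ge // (le_trans dt).
Qed.

Lemma tailint_freeze_le t : 0 < t -> t <= d ->
  tailint n i zd t = \int[mu]_(s in `[t, d]) frozen s + tailint n i z d.
Proof.
move=> t0 td; rewrite (tailint_split n i t0 td cont_supp_freeze) tailint_freeze_ge //.
congr (_ + _); apply: eq_Rintegral => s; rewrite inE /= in_itv /= => /andP[ts sd].
by rewrite /tail_integrand freeze_below_le // (lt_le_trans t0).
Qed.

Lemma DnR_freeze : D zd.
Proof.
have near_d : \forall t \near 0^'+, 0 < t /\ t <= d.
  by near=> t; split; near: t; [exact: nbhs_right_gt | exact: nbhs_right_le d_gt0].
apply: DnRP; first exact: cont_supp_freeze.
- by move=> t t0; rewrite /freeze_below ltNge t0.
- have tm : t ^+ m @[t --> 0^'+] --> (0 : R).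
    by have := cvg_at_right_filter (@exprn_continuous R m 0); rewrite expr0n gtn_eqF.
  have near_eq : \forall t \near 0^'+, t ^+ m * z d = t ^+ m * zd t.
    by apply: filterS near_d => t [t0 td]; rewrite freeze_below_le.
  apply: cvg_trans (near_eq_cvg near_eq) _.
  by have := cvgM tm (cvg_cst (z d)); rewrite mul0r; exact.
pose Id := \int[mu]_(s in `[0, d]) frozen s.
have frozen_int := integrable_frozen_integrand 0 d.
have int0 : \int[mu]_(s in `[0, t]) frozen s @[t --> 0^'+] --> 0.
  exact/cvg_at_right_filter/(parameterized_integral_cvg_left d_gt0 frozen_int).
have near_eq : \forall t \near 0^'+,
    Id - \int[mu]_(s in `[0, t]) frozen s + tailint n i z d = tailint n i zd t.
  apply: filterS near_d => t [t0 td].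
  have td' : (BRight t <= BRight d)%O by rewrite bnd_simp.
  rewrite tailint_freeze_le // /Id (Rintegral_itv_split (ltW t0) td' frozen_int).
  by rewrite [X in X - _ + _]addrC addrK.
exists (Id + tailint n i z d); apply: cvg_trans (near_eq_cvg near_eq) _.
have := cvgD (cvgB (cvg_cst Id) int0) (cvg_cst (tailint n i z d)).
by rewrite subr0; exact.
Unshelve. all: by end_near.
Qed.

Section Approximation.
Variables (eta L : R).
Hypothesis weight_small : forall t, 0 < t -> t <= d -> `|t ^+ m * z t| <= eta.
Hypothesis tail_close : forall t, 0 < t -> t <= d -> `|tailint n i z t - L| <= eta.

Lemma eta_ge0 : 0 <= eta.
Proof. exact: le_trans (weight_small d_gt0 (lexx d)). Qed.

Lemma weight_frozen_le t : 0 <= t -> t <= d -> `|t ^+ m * z d| <= eta.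
Proof.
move=> t0 td; apply: le_trans (weight_small d_gt0 (lexx d)).
rewrite !normrM ler_wpM2r // !ger0_norm ?exprn_ge0 ?(ltW d_gt0) //.
by apply: lerXn2r; rewrite ?nnegrE ?(ltW d_gt0).
Qed.

Lemma Rintegral_frozen_le t : 0 <= t -> t <= d -> `|\int[mu]_(s in `[t, d]) frozen s| <= eta.
Proof.
move=> t0 td; apply: le_trans (normr_Rintegral_frozen_le t0 td (lexx d)) _.
apply: le_trans (weight_frozen_le (ltW d_gt0) (lexx d)).
have dm : d ^+ m = d ^+ (m - 1) * d by rewrite -exprSr subn1 prednK.
apply: (@le_trans _ _ (`|z d| * d ^+ (m - 1) * d)).
  by apply: ler_wpM2l; [rewrite mulr_ge0 // exprn_ge0 // ltW | rewrite gerBl].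
rewrite dm !normrM (ger0_norm (exprn_ge0 _ (ltW d_gt0))) (ger0_norm (ltW d_gt0)).
by rewrite [leRHS]mulrC mulrA.
Qed.

Lemma tailint_sub_freeze_le t : 0 < t ->
  `|tailint n i z t - tailint n i zd t| <= 3 * eta.
Proof.
move=> t0; have [dt|td] := leP d t.
  by rewrite tailint_freeze_ge // subrr normr0 mulr_ge0 ?eta_ge0.
rewrite tailint_freeze_le ?(ltW td) //.
rewrite (_ : _ - _ = tailint n i z t - L - (tailint n i z d - L) -
  \int[mu]_(s in `[t, d]) frozen s); last by ring.
rewrite (_ : 3 * eta = eta + eta + eta); last by ring.
apply: le_trans (ler_normB _ _) _; apply: lerD.
  by apply: le_trans (ler_normB _ _) _; apply: lerD; apply: tail_close => //; exact: ltW.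
exact: Rintegral_frozen_le (ltW t0) (ltW td).
Qed.

Lemma weight_sub_freeze_le t : 0 < t -> `|t ^+ m * (z t - zd t)| <= 2 * eta.
Proof.
move=> t0; have [dt|td] := leP d t.
  by rewrite freeze_below_ge // subrr mulr0 normr0 mulr_ge0 ?eta_ge0.
rewrite freeze_below_le ?(ltW td) // mulrBr (_ : 2 * eta = eta + eta); last by ring.
apply: le_trans (ler_normB _ _) _; apply: lerD.
- exact: weight_small (ltW td).
- exact: weight_frozen_le (ltW t0) (ltW td).
Qed.

Lemma Dnorm_sub_freeze_le : Dnorm n i (z \- zd) <= (6 * m + 2)%:R * eta.
Proof.
have cz := DnR_cont_supp z_in; have m0 : 0 <= m%:R :> R by [].
have tail_le t : 0 < t -> `|tail_part n i (z \- zd) t| <= m%:R * (3 * eta).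
  move=> t0; rewrite /tail_part (tailintB _ _ t0 cz cont_supp_freeze) normrM.
  by rewrite ger0_norm // ler_wpM2l // tailint_sub_freeze_le.
rewrite (_ : _ * eta = m%:R * (3 * eta) + (2 * eta + m%:R * (3 * eta))); last first.
  by rewrite natrD natrM; ring.
apply: Dnorm_le => // t t0; apply: le_trans (ler_normD _ _) _.
by apply: lerD; [exact: weight_sub_freeze_le | exact: tail_le].
Qed.

End Approximation.

End Freeze.

Lemma DnR_density (R : realType) (n i : nat) (Rb : R) (z : R -> R) (e : R) :
  0 < Rb -> (0 < n - i)%N -> DnR n i Rb z -> 0 < e ->
  exists phi, DnR n i Rb phi /\
    (exists f, Cc0 f /\ forall t, 0 < t -> phi t = f t) /\
    Dnorm n i (z \- phi) < e.
Proof.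
move=> Rb_gt0 m_gt0 z_in e0.
have k0 : 0 < (6 * (n - i) + 3)%:R :> R by rewrite ltr0n addn3.
pose eta := e / (6 * (n - i) + 3)%:R; have eta0 : 0 < eta by rewrite divr_gt0.
have [L hL] := DnR_tail_cvg z_in.
have [d1 d1_gt0 near1] := cvg_at_right0_close (DnR_weight_cvg z_in) eta0.
have [d2 d2_gt0 near2] := cvg_at_right0_close hL eta0.
pose d := minr d1 d2 / 2.
have d0 : 0 < d by rewrite divr_gt0 // lt_min d1_gt0 d2_gt0.
have lt_d t : t <= d -> t < d1 /\ t < d2.
  move=> td; have : t < minr d1 d2.
    apply: le_lt_trans td _; have min_gt0 : 0 < minr d1 d2 by rewrite lt_min d1_gt0.
    by rewrite ltr_pdivrMr // ltr_pMr ?ltr1n.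
  by rewrite lt_min => /andP.
exists (freeze_below d z); split; first exact: DnR_freeze.
split.
  exists (fun t => z (maxr t d)); split => [|t t0]; last by rewrite /freeze_below t0.
  split; first exact: continuous_subspaceT (continuous_freeze z_in d0).
  exists Rb => t _ Rbt; apply: (DnR_cont_supp z_in).2.
  by rewrite lt_max Rbt.
apply: le_lt_trans (Dnorm_sub_freeze_le Rb_gt0 m_gt0 z_in d0 (eta := eta) (L := L) _ _) _.
- by move=> t t0 /lt_d[td1 _]; rewrite -[_ * _]subr0 near1.
- by move=> t t0 /lt_d[_ td2]; apply: near2.
by rewrite /eta mulrA ltr_pdivrMr // [ltRHS]mulrC ltr_pM2r // ltr_nat ltn_add2l.
Qed.

Theorem lemma2p7 (R : realType) (n i : nat) (Rb : R) :
  (2 <= n)%N -> (1 <= i)%N -> (i <= n - 1)%N -> 0 < Rb ->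
  (* D^n_{i,R} is a real vector space *)
  [/\ DnR n i Rb (fun _ => 0),
      (forall f g, DnR n i Rb f -> DnR n i Rb g -> DnR n i Rb (f \+ g)),
      (forall (a : R) f, DnR n i Rb f -> DnR n i Rb (fun t => a * f t)) &
  (* ||.|| is a (finite, real-valued) norm on it *)
  [/\ (forall f, DnR n i Rb f ->
         has_ubound [set `|(n - i)%:R * tailint n i f t| | t in `]0, +oo[] /\
         has_ubound [set `|t ^+ (n - i) * f t + (n - i)%:R * tailint n i f t|
                 | t in `]0, +oo[]),
      (forall f, DnR n i Rb f -> 0 <= Dnorm n i f),
      (forall f, DnR n i Rb f -> Dnorm n i f = 0 -> f = (fun _ => 0)),
      (forall (a : R) f, DnR n i Rb f ->
         Dnorm n i (fun t => a * f t) = `|a| * Dnorm n i f) &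
      (forall f g, DnR n i Rb f -> DnR n i Rb g ->
         Dnorm n i (f \+ g) <= Dnorm n i f + Dnorm n i g)] ] /\
  (* completeness *)
  (forall u : nat -> R -> R, (forall k, DnR n i Rb (u k)) ->
     (forall e : R, 0 < e -> exists N : nat, forall p q : nat,
        (N <= p)%N -> (N <= q)%N -> Dnorm n i (u p \- u q) < e) ->
     exists z, DnR n i Rb z /\ Dnorm n i (u k \- z) @[k --> \oo] --> 0) /\
  (* density of C_c([0,oo)) \cap D^n_{i,R} *)
  (forall z, DnR n i Rb z -> forall e : R, 0 < e ->
     exists phi, DnR n i Rb phi /\
       (exists f, Cc0 f /\ forall t, 0 < t -> phi t = f t) /\
       Dnorm n i (z \- phi) < e).
Proof.
move=> n_ge2 i_ge1 i_le Rb_gt0.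
have m_gt0 : (0 < n - i)%N.
  by rewrite subn_gt0 (leq_ltn_trans i_le) // subn1 ltn_predL (ltnW n_ge2).
split; first split.
- exact: DnR0.
- exact: DnRD.
- exact: DnRZ.
- split.
  + move=> f Df; split.
    * exact (has_ubound_tail_part Rb_gt0 Df).
    * exact (has_ubound_full_part Rb_gt0 Df).
  + exact (Dnorm_ge0 Rb_gt0).
  + exact (Dnorm_eq0 Rb_gt0).
  + exact (DnormZ Rb_gt0).
  + exact (Dnorm_triangle Rb_gt0).
split.
- exact (DnR_complete Rb_gt0 m_gt0).
- move=> z z_in e; exact (DnR_density Rb_gt0 m_gt0 z_in).
Qed.
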